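(* Suppose the Oracle Mechanism with a polynomial-time $\gamma$-approximation oracle ($0<\gamma\le 1$), as described in the context, is run with the reduced budget $\gamma B$ in place of $B$. Then there is a function $\varepsilon(\theta)\ge0$ depending only on $\theta$ with $\varepsilon(\theta)\to0$ as $\theta\to0$ such that on every instance with largeness ratio $\theta$, the total payment is at most $(1+\varepsilon(\theta))B$ and the utility of the winning set is at least $(\gamma^2/2-\varepsilon(\theta))F^\star$, where $F^\star$ is the optimum for the original budget $B$.
   Context: Sellers $S=\{1,\dots,n\}$ each own one indivisible item and have a cost $c_i\ge0$. The buyer's utility is a monotone submodular $F:2^S\to\mathbb R_{\ge0}$, budget $B>0$. $c(T)=\sum_{i\in T}c_i$. For a budget $b$, $F^\star_b=\max\{F(T):c(T)\le b\}$; $F^\star=F^\star_B>0$; the largeness ratio is $\theta=\max_sF(\{s\})/F^\star$. Greedy sequence $\chi(F)=\langle x_1,\dots,x_n\rangle$: with $\chi_0=\emptyset$, $\chi_i=\{x_1,\dots,x_i\}$, $x_i$ maximizes $(F(\chi_{i-1}\cup\{s\})-F(\chi_{i-1}))/c_s$ over $s\notin\chi_{i-1}$ (ratio $+\infty$ if $c_s=0$; ties arbitrary); $\partial_i=F(\chi_i)-F(\chi_{i-1})$. A $\gamma$-approximation oracle, given an instance with known costs and a budget $b$, returns in polynomial time a set $T$ with $c(T)\le b$ and $F(T)\ge\gamma F^\star_b$. The mechanism with budget $b$: $\hat F$ = utility of the oracle's solution (budget $b$); for each seller $s$, $\hat F_s$ = utility of the oracle's solution with $s$ removed, $r_s=b/\hat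 F_s$; take the largest $k$ with $F(\chi_k)\le\hat F/2$; winners $\chi_k$; winner $x_j$ is paid $2r_{x_j}\partial_j$. Here $b=\gamma B$. *)

From HB Require Import structures.
From mathcomp Require Import all_boot all_order all_algebra.
From mathcomp Require Import reals constructive_ereal.
Set Implicit Arguments. Unset Strict Implicit. Unset Printing Implicit Defensive.
Import Order.TTheory GRing.Theory Num.Theory.
Local Open Scope ring_scope.

Section Defs.
Variable R : realType.

Definition monotone_fn n (F : {set 'I_n} -> R) :=
  forall A B : {set 'I_n}, A \subset B -> F A <= F B.

Definition submodular_fn n (F : {set 'I_n} -> R) :=
  forall (A B : {set 'I_n}) (s : 'I_n), A \subset B -> s \notin B ->
    F (s |: B) - F B <= F (s |: A) - F A.

Definition nonneg_fn n (F : {set 'I_n} -> R) := forall A, 0 <= F A.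

Definition cost n (c : 'I_n -> R) (T : {set 'I_n}) : R := \sum_(i in T) c i.

(* Optimum with budget b among sets of available sellers A:
   max { F T : T \subset A, c(T) <= b }.  (Seeded with 0, which is harmless
   since F >= 0 and the empty set is feasible whenever c >= 0 and b >= 0.) *)
Definition opt n (F : {set 'I_n} -> R) (c : 'I_n -> R) (A : {set 'I_n}) (b : R) : R :=
  \big[Num.max/0]_(T : {set 'I_n} | (T \subset A) && (cost c T <= b)) F T.

Definition Fstar n F c b := @opt n F c setT b.

Definition largeness n (F : {set 'I_n} -> R) (c : 'I_n -> R) (B : R) : R :=
  (\big[Num.max/0]_(s : 'I_n) F [set s]) / Fstar F c B.

Definition valid_instance n (F : {set 'I_n} -> R) (c : 'I_n -> R) :=
  [/\ nonneg_fn F, monotone_fn F, submodular_fn F & forall i, 0 <= c i].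

(* An oracle takes an instance (n sellers, utility F, costs c), the set A of
   sellers present (the instance "with s removed" is A = [set~ s]) and a budget
   b, and returns a set of sellers. *)
Definition oracle_type :=
  forall n : nat, ({set 'I_n} -> R) -> ('I_n -> R) -> {set 'I_n} -> R -> {set 'I_n}.

Definition approx_oracle (gamma : R) (O : oracle_type) :=
  forall n (F : {set 'I_n} -> R) (c : 'I_n -> R) (A : {set 'I_n}) (b : R),
    valid_instance F c -> 0 < b ->
    [/\ O n F c A b \subset A, cost c (O n F c A b) <= b &
        gamma * opt F c A b <= F (O n F c A b)].

Definition ratio (d cs : R) : \bar R :=
  if cs == 0 then +oo%E else (d / cs)%:E.

(* chi_i = {x_1, ..., x_i}  (with x 0-indexed: {x 0, ..., x (i-1)}) *)
Definition chi n (x : 'I_n -> 'I_n) (i : nat) : {set 'I_n} :=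
  [set x j | j : 'I_n & (j < i)%N].

Definition greedy_seq n (F : {set 'I_n} -> R) (c : 'I_n -> R) (x : 'I_n -> 'I_n) :=
  injective x /\
  forall (i : 'I_n) (s : 'I_n), s \notin chi x i ->
    (ratio (F (s |: chi x i) - F (chi x i)) (c s)
      <= ratio (F (x i |: chi x i) - F (chi x i)) (c (x i)))%E.

Definition partial n (F : {set 'I_n} -> R) (x : 'I_n -> 'I_n) (j : nat) : R :=
  F (chi x j.+1) - F (chi x j).

Definition Fhat (O : oracle_type) n F c (b : R) : R := F (O n F c setT b).
Definition Fhat_s (O : oracle_type) n F c (b : R) (s : 'I_n) : R :=
  F (O n F c [set~ s] b).
Definition rate (O : oracle_type) n F c (b : R) (s : 'I_n) : R :=
  b / Fhat_s O F c b s.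

Definition winner_count (O : oracle_type) n F c (b : R) (x : 'I_n -> 'I_n) (k : nat) :=
  [/\ (k <= n)%N, F (chi x k) <= Fhat O F c b / 2 &
      forall k' : nat, (k' <= n)%N -> F (chi x k') <= Fhat O F c b / 2 -> (k' <= k)%N].

Definition total_payment (O : oracle_type) n F c (b : R) (x : 'I_n -> 'I_n) (k : nat) : R :=
  \sum_(j < n | (j < k)%N) 2 * rate O F c b (x j) * partial F x j.

End Defs.

From HB Require Import structures.
From mathcomp Require Import all_boot all_order all_algebra.
From mathcomp Require Import reals constructive_ereal.
From mathcomp.algebra_tactics Require Import ring lra.
Set Implicit Arguments. Unset Strict Implicit. Unset Printing Implicit Defensive.
Import Order.TTheory GRing.Theory Num.Theory.
Local Open Scope ring_scope.

(* Order an optimal set [T] for budget [B] and charge each element its marginal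
   value along that order: these marginals are at most the largest singleton
   value [M = theta F^*], so a fractional-knapsack argument finds a subset of
   cost [gamma B] and value at least [gamma F^* - M]. Hence the oracle run with
   budget [gamma B] yields [F^ >= gamma (gamma F^* - M)], and removing a seller
   [s] costs it at most [gamma F({s})]. The winners stop one item short of
   [F^/2], so their utility is at least [F^/2 - M], while their payments
   telescope to at most [B F^ / (F^ - M) = (1 + O(theta)) B]; for large [theta]
   the cruder bound [2B] suffices. Both regimes are covered by
   [eps theta = 4 theta / gamma^2]. *)

Section Submodular.
Variables (R : realType) (n : nat) (F : {set 'I_n} -> R).
Hypotheses (F0 : nonneg_fn F) (Fm : monotone_fn F) (Fs : submodular_fn F).
Implicit Types (A S T U : {set 'I_n}) (i s : 'I_n).

Lemma submod_setU1_le A s : F (s |: A) <= F A + F [set s].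
Proof.
have [sA|sNA] := boolP (s \in A).
  by rewrite (setUidPr _) ?sub1set // lerDl F0.
have := Fs (sub0set A) sNA; rewrite setU0; have := F0 set0; lra.
Qed.

Definition prefix (U : {set 'I_n}) (m : nat) := [set j in U | (j < m)%N].

Definition marginal U (i : 'I_n) := F (i |: prefix U i) - F (prefix U i).

Lemma prefixS U (i : 'I_n) :
  prefix U i.+1 = if i \in U then i |: prefix U i else prefix U i.
Proof.
apply/setP => j; rewrite !inE ltnS leq_eqVlt val_eqE.
by case: ifP => iU; rewrite !inE; have [->|] := eqVneq j i; rewrite ?iU ?ltnn ?andbF.
Qed.

Lemma telescope_marginal U : F U - F set0 = \sum_(i in U) marginal U i.
Proof.
have prefix0 : prefix U 0 = set0 by apply/setP => j; rewrite !inE andbF.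
have prefixn : prefix U n = U by apply/setP => j; rewrite inE ltn_ord andbT.
have := telescope_sumr (fun m => F (prefix U m)) (leq0n n).
rewrite prefix0 prefixn => <-; rewrite big_mkord [RHS]big_mkcond.
by apply: eq_bigr => i _; rewrite prefixS /marginal; case: (i \in U); rewrite ?subrr.
Qed.

Lemma sum_marginal_le S T : S \subset T ->
  \sum_(i in S) marginal T i <= F S - F set0.
Proof.
move=> sST; rewrite telescope_marginal; apply: ler_sum => i Si; apply: Fs.
  by apply/subsetP => j; rewrite !inE => /andP[/(subsetP sST) -> ->].
by rewrite inE ltnn andbF.
Qed.

Lemma marginal_le_singleton U i : marginal U i <= F [set i].
Proof. rewrite /marginal; have := submod_setU1_le (prefix U i) i; lra. Qed.

Lemma marginal_ge0 U i : 0 <= marginal U i.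
Proof. by rewrite subr_ge0 Fm ?subsetUr. Qed.

End Submodular.

Section FractionalKnapsack.
Variables (R : realType) (I : finType) (g c : I -> R).
Hypotheses (g0 : forall i, 0 <= g i) (c0 : forall i, 0 <= c i).
Implicit Types A S : {set I}.

Lemma exists_low_density A i0 : i0 \in A ->
  exists2 i, i \in A & g i * \sum_(j in A) c j <= (\sum_(j in A) g j) * c i.
Proof.
move=> Ai0; set C := \sum_(j in A) c j; set G := \sum_(j in A) g j.
case: (boolP [exists i in A, g i * C <= G * c i]) => [/exists_inP//|/exists_inPn dense].
have : \sum_(i in A) G * c i < \sum_(i in A) g i * C.
  apply: ltr_sum => [|i Ai]; first by apply/hasP; exists i0; rewrite ?mem_index_enum.
  by rewrite ltNge dense.
by rewrite -mulr_sumr -mulr_suml -/C -/G mulrC ltxx.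
Qed.

Lemma knapsack_fraction (M lam : R) A : 0 <= M -> 0 <= lam <= 1 ->
    (forall i, i \in A -> g i <= M) ->
  exists S, [/\ S \subset A, \sum_(i in S) c i <= lam * \sum_(i in A) c i &
                lam * \sum_(i in A) g i - M <= \sum_(i in S) g i].
Proof.
move=> M0; elim: {A}#|A| {-2}A (leqnn #|A|) lam => [|m IH] A leAm lam
  /andP[lam0 lam1] gM; have [->|[i0 Ai0]] := set_0Vmem A;
  try by exists set0; rewrite !big_set0 mulr0 sub0set; split => //; lra.
  by move: leAm; rewrite leqn0 cards_eq0 => /eqP A0; rewrite A0 inE in Ai0.
have [i Ai low] := exists_low_density Ai0.
set A' := A :\ i.
have leA'm : (#|A'| <= m)%N by move: leAm; rewrite (cardsD1 i A) Ai.
have gM' j : j \in A' -> g j <= M by rewrite inE => /andP[_ /gM].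
move: low; rewrite !(big_setD1 i Ai) /= -/A'.
set C' := \sum_(j in A') c j; set G' := \sum_(j in A') g j => low.
have C'0 : 0 <= C' by apply: sumr_ge0.
have G'0 : 0 <= G' by apply: sumr_ge0.
have ci0 := c0 i; have gi0 := g0 i; have giM := gM i Ai.
have [C'le|C'gt] := lerP C' (lam * (c i + C')).
  exists A'; rewrite -/C' -/G'; split => //; first exact: subD1set.
  have : lam * (g i + G') <= g i + G' by rewrite ler_piMl // addr_ge0.
  lra.
have C'p : 0 < C' by apply: le_lt_trans C'gt; rewrite mulr_ge0 // addr_ge0.
pose lam' := lam * (c i + C') / C'.
have lam'0 : 0 <= lam' by rewrite divr_ge0 // mulr_ge0 // addr_ge0.
have lam'1 : lam' <= 1 by rewrite ler_pdivrMr // mul1r ltW.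
have [S [sSA' cS gS]] := IH A' leA'm lam' (introT andP (conj lam'0 lam'1)) gM'.
rewrite -/C' in cS; rewrite -/G' in gS.
exists S; split; first exact: subset_trans sSA' (subD1set _ _).
  by rewrite /lam' divfK ?gt_eqF in cS.
suff : lam * (g i + G') <= lam' * G' by lra.
have densityA : (g i + G') * C' <= (c i + C') * G' by nra.
by rewrite /lam' mulrAC ler_pdivlMr // -!mulrA ler_wpM2l.
Qed.

End FractionalKnapsack.

Section Optimum.
Variables (R : realType) (n : nat) (F : {set 'I_n} -> R) (c : 'I_n -> R).
Hypothesis valid : valid_instance F c.
Implicit Types (A S T : {set 'I_n}) (b : R).

Lemma cost_subset S T : S \subset T -> cost c S <= cost c T.
Proof.
have [_ _ _ c0] := valid; move=> sST; rewrite /cost [leRHS](big_setID S) /=.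
by rewrite (setIidPr sST) lerDl sumr_ge0.
Qed.

Lemma le_opt A T b : T \subset A -> cost c T <= b -> F T <= opt F c A b.
Proof. by move=> sTA cTb; apply: le_bigmax_cond; rewrite sTA cTb. Qed.

Lemma Fstar_attained b : 0 <= b -> exists2 T, cost c T <= b & F T = Fstar F c b.
Proof.
have [F0 _ _ _] := valid; move=> b0.
pose feasible T := (T \subset setT) && (cost c T <= b).
have feas0 : feasible set0 by rewrite /feasible sub0set /cost big_set0.
have [T] := eq_bigmax _ _ F feas0 (fun T _ => F0 T).
by rewrite unfold_in => /andP[_ cTb] FT; exists T.
Qed.

Lemma Fstar_scale_budget (gamma M b : R) : 0 <= gamma <= 1 -> 0 <= b -> 0 <= M ->
    (forall s, F [set s] <= M) ->
  gamma * Fstar F c b - M <= Fstar F c (gamma * b).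
Proof.
have [F0 Fm Fs c0] := valid; move=> /andP[g0 g1] b0 M0 FM.
have [T cTb FT] := Fstar_attained b0.
have [S [sST cS gS]] := knapsack_fraction (marginal_ge0 Fm T) c0 (A := T) M0
  (introT andP (conj g0 g1)) (fun i _ => le_trans (marginal_le_singleton F0 Fs T i) (FM i)).
have FS : gamma * Fstar F c b - M <= F S.
  move: gS; rewrite -telescope_marginal FT => gS.
  have := sum_marginal_le Fs sST; have := F0 set0.
  have : gamma * F set0 <= F set0 by exact: ler_piMl.
  lra.
apply: le_trans FS (le_opt (subsetT S) _).
by apply: le_trans cS _; rewrite ler_wpM2l.
Qed.

End Optimum.

Section Oracle.
Variables (R : realType) (gamma : R) (O : oracle_type R).
Hypotheses (gamma_ge0 : 0 <= gamma) (O_approx : approx_oracle gamma O).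
Variables (n : nat) (F : {set 'I_n} -> R) (c : 'I_n -> R) (b : R).
Hypotheses (valid : valid_instance F c) (b_gt0 : 0 < b).

Lemma Fhat_ge : gamma * Fstar F c b <= Fhat O F c b.
Proof. by have [] := O_approx setT valid b_gt0. Qed.

(* Dropping [s] from the oracle's own solution is feasible without [s]. *)
Lemma Fhat_s_ge s : gamma * (Fhat O F c b - F [set s]) <= Fhat_s O F c b s.
Proof.
have [F0 Fm Fs _] := valid.
have [_ cO _] := O_approx setT valid b_gt0.
have [_ _ approx_s] := O_approx [set~ s] valid b_gt0.
set O0 := O F c setT b in cO *.
have le_opt_s : F (O0 :\ s) <= opt F c [set~ s] b.
  apply: le_opt => //; last exact: le_trans (cost_subset valid (subD1set _ _)) cO.
  by apply/subsetP => j; rewrite !inE => /andP[].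
have split_s : F O0 <= F (O0 :\ s) + F [set s].
  apply: le_trans (submod_setU1_le F0 Fs _ s); apply: Fm.
  by apply/subsetP => j Oj; rewrite in_setU1 in_setD1 Oj andbT orbN.
apply: le_trans approx_s; apply: ler_wpM2l => //.
rewrite /Fhat -/O0; lra.
Qed.

End Oracle.

Section GreedyPrefix.
Variables (n : nat) (x : 'I_n -> 'I_n).

Lemma chi0 : chi x 0 = set0.
Proof. by apply/setP => s; rewrite inE; apply/imsetP => -[j]; rewrite inE. Qed.

Lemma chiS (j : 'I_n) : chi x j.+1 = x j |: chi x j.
Proof.
apply/setP => s; rewrite in_setU1; apply/imsetP/predU1P.
  move=> [i]; rewrite inE ltnS leq_eqVlt => /predU1P[/val_inj-> ->|ij ->]; first by left.
  by right; apply/imsetP; exists i; rewrite ?inE.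
case=> [->|/imsetP[i]]; first by exists j; rewrite ?inE.
by rewrite inE => ij ->; exists i; rewrite // inE ltnS ltnW.
Qed.

Lemma chi_subset i j : (i <= j)%N -> chi x i \subset chi x j.
Proof.
move=> ij; apply/subsetP => s /imsetP[l]; rewrite inE => li ->.
by apply/imsetP; exists l; rewrite // inE (leq_trans li ij).
Qed.

Lemma mem_chi (j : 'I_n) k : (j < k)%N -> x j \in chi x k.
Proof. by move=> jk; apply/imsetP; exists j; rewrite ?inE. Qed.

Lemma chi_full : injective x -> chi x n = setT.
Proof.
move=> x_inj; apply/setP => s; rewrite inE.
have [y _ xK] := injF_bij x_inj.
by apply/imsetP; exists (y s); rewrite ?inE ?ltn_ord ?xK.
Qed.

End GreedyPrefix.

Section Mechanism.
Variables (R : realType) (gamma : R) (O : oracle_type R).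
Hypotheses (gamma_gt0 : 0 < gamma) (gamma_le1 : gamma <= 1)
  (O_approx : approx_oracle gamma O).
Variables (n : nat) (F : {set 'I_n} -> R) (c : 'I_n -> R) (B : R)
  (x : 'I_n -> 'I_n) (k : nat).
Hypotheses (valid : valid_instance F c) (B_gt0 : 0 < B)
  (Fstar_gt0 : 0 < Fstar F c B) (x_inj : injective x)
  (winners : winner_count O F c (gamma * B) x k).

Local Notation b := (gamma * B).
Local Notation Fh := (Fhat O F c b).
Local Notation Fst := (Fstar F c B).
Local Notation theta := (largeness F c B).

Let F0 : nonneg_fn F. Proof. by case: valid. Qed.
Let Fm : monotone_fn F. Proof. by case: valid. Qed.
Let Fs : submodular_fn F. Proof. by case: valid. Qed.
Let b_gt0 : 0 < b. Proof. exact: mulr_gt0. Qed.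

Lemma largeness_ge0 : 0 <= theta.
Proof. by rewrite divr_ge0 ?bigmax_ge_id ?ltW. Qed.

Lemma singleton_le_largeness s : F [set s] <= theta * Fst.
Proof. by rewrite divfK ?gt_eqF //; apply: le_bigmax. Qed.

Lemma Fhat_lower : gamma * (gamma * Fst - theta * Fst) <= Fh.
Proof.
apply: le_trans (Fhat_ge O_approx valid b_gt0); apply: ler_wpM2l; first exact: ltW.
apply: (Fstar_scale_budget valid); last exact: singleton_le_largeness.
- by rewrite (ltW gamma_gt0) gamma_le1.
- exact: ltW.
- by rewrite mulr_ge0 ?largeness_ge0 ?ltW.
Qed.

Lemma winners_utility : Fh / 2 - theta * Fst <= F (chi x k).
Proof.
have [le_kn _ k_max] := winners.
have M_ge0 : 0 <= theta * Fst by rewrite mulr_ge0 ?largeness_ge0 ?ltW.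
have [lt_kn|le_nk] := ltnP k n.
  have : Fh / 2 < F (chi x k.+1).
    by rewrite ltNge; apply/negP => /(k_max _ lt_kn); rewrite ltnn.
  have := chiS x (Ordinal lt_kn); rewrite /= => ->.
  have := submod_setU1_le F0 Fs (chi x k) (x (Ordinal lt_kn)).
  have := singleton_le_largeness (x (Ordinal lt_kn)); lra.
have -> : k = n by apply/eqP; rewrite eqn_leq le_kn.
rewrite chi_full //; have : Fh <= F setT by apply: Fm; exact: subsetT.
have := F0 (O F c setT b); rewrite /Fhat; lra.
Qed.

Lemma winners_utility_bound :
  (gamma ^+ 2 / 2 - 4 / gamma ^+ 2 * theta) * Fst <= F (chi x k).
Proof.
have g2_le1 : gamma ^+ 2 <= 1 by rewrite exprn_ile1 // ltW.
have coef_ge4 : 4 <= 4 / gamma ^+ 2 by rewrite ler_pdivlMr ?exprn_gt0 //; lra.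
have : 4 * (theta * Fst) <= 4 / gamma ^+ 2 * theta * Fst.
  rewrite mulrA ler_pM2r //; exact: (ler_wpM2r largeness_ge0 coef_ge4).
have := winners_utility; have := Fhat_lower.
have : gamma * (theta * Fst) <= theta * Fst.
  by apply: ler_piMl; rewrite // mulr_ge0 ?largeness_ge0 ?ltW.
have : 0 <= theta * Fst by rewrite mulr_ge0 ?largeness_ge0 ?ltW.
rewrite expr2; lra.
Qed.

Lemma sum_partial : \sum_(j < n | (j < k)%N) partial F x j = F (chi x k) - F set0.
Proof.
have [le_kn _ _] := winners.
rewrite -(big_ord_widen n (partial F x) le_kn) -(big_mkord xpredT).
by rewrite telescope_sumr // chi0.
Qed.

Lemma total_payment_le L : 0 < L ->
    (forall j : 'I_n, (j < k)%N -> L <= Fhat_s O F c b (x j)) ->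
  total_payment O F c b x k <= 2 * (b / L) * F (chi x k).
Proof.
move=> L_gt0 L_le.
have partial_ge0 j : 0 <= partial F x j by rewrite subr_ge0 Fm // chi_subset.
apply: (@le_trans _ _ (\sum_(j < n | (j < k)%N) 2 * (b / L) * partial F x j)).
  apply: ler_sum => j jk; apply: ler_wpM2r => //; apply: ler_wpM2l => //.
  apply: ler_wpM2l; first exact: ltW.
  have Fs_ge := L_le j jk.
  by rewrite lef_pV2 ?posrE // (lt_le_trans L_gt0).
rewrite -big_distrr /= sum_partial; apply: ler_wpM2l.
  by rewrite mulr_ge0 // divr_ge0 // ltW.
by rewrite gerDl oppr_le0 F0.
Qed.

Lemma total_payment_le_2B : total_payment O F c b x k <= 2 * B.
Proof.
have [_ chi_k _] := winners.
have [Fh_gt0|Fh_le0] := ltrP 0 Fh.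
  have L_gt0 : 0 < gamma * (Fh / 2) by rewrite mulr_gt0 // divr_gt0.
  apply: le_trans (total_payment_le L_gt0 _) _.
    move=> j jk; apply: le_trans (Fhat_s_ge (ltW gamma_gt0) O_approx valid b_gt0 _).
    apply: ler_wpM2l; first exact: ltW.
    have : F [set x j] <= F (chi x k) by apply: Fm; rewrite sub1set mem_chi.
    lra.
  apply: le_trans (ler_wpM2l _ chi_k) _; first by rewrite mulr_ge0 // divr_ge0 // ltW.
  have -> : 2 * (b / (gamma * (Fh / 2))) * (Fh / 2) = 2 * B by field; rewrite ?gt_eqF.
  exact: lexx.
rewrite /total_payment big1 ?mulr_ge0 ?ltW // => j jk.
suff -> : partial F x j = 0 by rewrite mulr0.
have : F (chi x j.+1) <= F (chi x k) by apply: Fm; rewrite chi_subset.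
have : F (chi x j) <= F (chi x j.+1) by apply: Fm; rewrite chi_subset.
have := F0 (chi x j); rewrite /partial; lra.
Qed.

Lemma total_payment_small : theta < gamma ^+ 2 / 4 ->
  total_payment O F c b x k <= (1 + 4 / gamma ^+ 2 * theta) * B.
Proof.
move=> small; have [_ chi_k _] := winners.
have M_ge0 : 0 <= theta * Fst by rewrite mulr_ge0 ?largeness_ge0 ?ltW.
have M4 : 4 * (theta * Fst) <= gamma ^+ 2 * Fst.
  by rewrite mulrA ler_pM2r // mulrC -ler_pdivlMr // ltW.
have gM : gamma * (theta * Fst) <= theta * Fst by exact: ler_piMl.
have := Fhat_lower; rewrite mulrBr mulrA -expr2 => Fh_lb.
have G2_gt0 : 0 < gamma ^+ 2 * Fst by rewrite mulr_gt0 ?exprn_gt0.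
set L := Fh - theta * Fst.
have L2 : gamma ^+ 2 * Fst <= 2 * L by rewrite /L; lra.
have L_gt0 : 0 < L by lra.
have Fh_le : Fh <= (1 + 4 / gamma ^+ 2 * theta) * L.
  have : 4 / gamma ^+ 2 * theta * (gamma ^+ 2 * Fst) <= 4 / gamma ^+ 2 * theta * (2 * L).
    apply: ler_wpM2l L2; apply: mulr_ge0 largeness_ge0.
    by rewrite divr_ge0 // exprn_ge0 // ltW.
  have -> : 4 / gamma ^+ 2 * theta * (gamma ^+ 2 * Fst) = 4 * (theta * Fst).
    by field; rewrite gt_eqF.
  rewrite /L; lra.
have gL_gt0 : 0 < gamma * L by rewrite mulr_gt0.
apply: le_trans (total_payment_le gL_gt0 _) _.
  move=> j jk; apply: le_trans (Fhat_s_ge (ltW gamma_gt0) O_approx valid b_gt0 _).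
  apply: ler_wpM2l; first exact: ltW.
  have := singleton_le_largeness (x j); rewrite /L; lra.
apply: le_trans (ler_wpM2l _ chi_k) _; first by rewrite mulr_ge0 // divr_ge0 // ltW.
have -> : 2 * (b / (gamma * L)) * (Fh / 2) = B / L * Fh by field; rewrite ?gt_eqF.
apply: le_trans (ler_wpM2l _ Fh_le) _; first by rewrite divr_ge0 // ltW.
have -> : B / L * ((1 + 4 / gamma ^+ 2 * theta) * L) = (1 + 4 / gamma ^+ 2 * theta) * B.
  by field; rewrite !gt_eqF.
exact: lexx.
Qed.

Lemma total_payment_bound :
  total_payment O F c b x k <= (1 + 4 / gamma ^+ 2 * theta) * B.
Proof.
have [small|large] := ltP theta (gamma ^+ 2 / 4); first exact: total_payment_small.
apply: le_trans total_payment_le_2B _; rewrite ler_pM2r //.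
suff : 1 <= 4 / gamma ^+ 2 * theta by lra.
by rewrite mulrAC ler_pdivlMr ?exprn_gt0 //; lra.
Qed.

End Mechanism.

Theorem corollary2 (R : realType) (gamma : R) (O : oracle_type R) :
  0 < gamma <= 1 ->
  approx_oracle gamma O ->
  exists eps : R -> R,
    (forall t, 0 <= eps t) /\
    (forall e : R, 0 < e -> exists d : R, 0 < d /\
        forall t : R, 0 < t < d -> eps t < e) /\
    forall (n : nat) (F : {set 'I_n} -> R) (c : 'I_n -> R) (B : R)
           (x : 'I_n -> 'I_n) (k : nat),
      valid_instance F c -> 0 < B -> 0 < Fstar F c B ->
      greedy_seq F c x ->
      winner_count O F c (gamma * B) x k ->
      let theta := largeness F c B in
      total_payment O F c (gamma * B) x k <= (1 + eps theta) * B /\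
      (gamma ^+ 2 / 2 - eps theta) * Fstar F c B <= F (chi x k).
Proof.
move=> /andP[gamma_gt0 gamma_le1] O_approx.
have K_gt0 : 0 < 4 / gamma ^+ 2 by rewrite divr_gt0 ?exprn_gt0.
exists (fun t => 4 / gamma ^+ 2 * `|t|); split; [|split].
- by move=> t; rewrite mulr_ge0 // ltW.
- move=> e e_gt0; exists (e / (4 / gamma ^+ 2)); split; first exact: divr_gt0.
  by move=> t /andP[t_gt0 t_lt]; rewrite gtr0_norm // [_ * t]mulrC -ltr_pdivlMr.
move=> n F c B x k valid B_gt0 Fstar_gt0 [x_inj _] winners theta.
rewrite /theta ger0_norm ?largeness_ge0 //; split.
  exact: (total_payment_bound gamma_gt0 gamma_le1 O_approx valid B_gt0 Fstar_gt0 winners).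
exact: (winners_utility_bound gamma_gt0 gamma_le1 O_approx valid B_gt0 Fstar_gt0 x_inj winners).
Qed.
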